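(* Every abelian group of squarefree composite order is GRR-detecting.
   Context: For a group $R$ and $S\subseteq R$, the Cayley digraph $\mathrm{Cay}(R,S)$ has vertex set $R$ and an arc from $r$ to $sr$ whenever $s\in S$. It is a GRR if $S=S^{-1}$ and $\mathrm{Aut}(\mathrm{Cay}(R,S))$ equals the right regular representation $\hat R$. $\mathrm{Aut}(R)_S$ is the group of automorphisms of $R$ fixing $S$ setwise. $R$ is GRR-detecting if for every $S\subseteq R$ with $S=S^{-1}$, $\mathrm{Aut}(R)_S=1$ implies $\mathrm{Cay}(R,S)$ is a GRR. *)

From HB Require Import structures.
From mathcomp Require Import all_boot all_fingroup.
Set Implicit Arguments. Unset Strict Implicit. Unset Printing Implicit Defensive.
Import GroupScope.

(* The group R is the whole finite group type gT. *)

(* Arc of Cay(R,S) from r to s*r (s in S):  x -> y  iff  y * x^-1 \in S. *)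
Definition cay_arc (gT : finGroupType) (S : {set gT}) (x y : gT) : bool :=
  y * x^-1 \in S.

Definition cay_aut (gT : finGroupType) (S : {set gT}) : {set {perm gT}} :=
  [set sigma : {perm gT} |
     [forall x, forall y, cay_arc S (sigma x) (sigma y) == cay_arc S x y]].

Definition right_regular (gT : finGroupType) : {set {perm gT}} :=
  [set sigma : {perm gT} | [exists g : gT, [forall x, sigma x == x * g]]].

Definition is_GRR (gT : finGroupType) (S : {set gT}) : Prop :=
  S^-1 = S /\ cay_aut S = right_regular gT.

Definition aut_stab (gT : finGroupType) (S : {set gT}) : {set {perm gT}} :=
  [set a in Aut [set: gT] | a @: S == S].

Definition GRR_detecting (gT : finGroupType) : Prop :=
  forall S : {set gT}, S^-1 = S -> aut_stab S = 1 -> is_GRR S.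

Definition squarefree (n : nat) : bool :=
  [forall p : 'I_n.+1, prime p ==> ~~ (p * p %| n)].

Definition composite (n : nat) : bool := (1 < n) && ~~ prime n.

From mathcomp Require Import all_boot all_fingroup all_solvable.

Set Implicit Arguments.
Unset Strict Implicit.
Unset Printing Implicit Defensive.

Import GroupScope.

(* In an abelian group inversion is an automorphism, and it fixes every
   inverse-closed set S; so Aut(R)_S is never trivial unless inversion is the
   identity, i.e. unless R has exponent 2. Such an R is a 2-group, and a power
   of 2 is squarefree only if it is 1 or 2. Hence for abelian R of squarefree
   composite order the hypothesis Aut(R)_S = 1 never holds. *)

Section Inversion.

Variable gT : finGroupType.

Definition inv_perm : {perm gT} := perm (@invg_inj gT).

Lemma inv_permE x : inv_perm x = x^-1.
Proof. exact: permE. Qed.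

Lemma inv_perm_Aut : abelian [set: gT] -> inv_perm \in Aut [set: gT].
Proof.
move=> abT; rewrite inE; apply/andP; split.
  by apply/subsetP=> x _; rewrite inE.
apply/morphicP=> x y _ _.
by rewrite !inv_permE invMg; apply: (centsP abT); rewrite inE.
Qed.

Lemma inv_perm_imset (S : {set gT}) : inv_perm @: S = S^-1.
Proof.
by rewrite (eq_imset _ inv_permE) (can_imset_pre _ (@invgK gT)).
Qed.

Lemma inv_perm_aut_stab (S : {set gT}) :
  abelian [set: gT] -> S^-1 = S -> inv_perm \in aut_stab S.
Proof. by move=> abT SV; rewrite inE inv_perm_Aut //= inv_perm_imset SV. Qed.

Lemma inv_perm_eq1_2group : inv_perm = 1 -> 2.-group [set: gT].
Proof.
move=> inv1; apply/abelem_pgroup/exponent2_abelem/exponentP=> x _.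
have xV : x^-1 = x by rewrite -inv_permE inv1 perm1.
by rewrite expgS expg1 -{1}xV mulVg.
Qed.

Lemma abelian_aut_stab_neq1 (S : {set gT}) :
  abelian [set: gT] -> ~~ 2.-group [set: gT] -> S^-1 = S -> aut_stab S != 1.
Proof.
move=> abT not2 SV; apply: contra not2 => /eqP stab1.
apply: inv_perm_eq1_2group; apply/set1P; rewrite -[[set 1]]stab1.
exact: inv_perm_aut_stab.
Qed.

End Inversion.

Lemma squarefree_sqr_ndvd n p :
  0 < n -> squarefree n -> prime p -> ~~ (p * p %| n).
Proof.
move=> n_gt0 /forallP sqf p_pr; apply/negP=> dvd_pp.
have lt_pn : p < n.+1.
  by rewrite ltnS (leq_trans _ (dvdn_leq n_gt0 dvd_pp)) // leq_pmulr ?prime_gt0.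
by move: (sqf (Ordinal lt_pn)); rewrite /= p_pr dvd_pp.
Qed.

Lemma squarefree_composite_not_2nat n :
  squarefree n -> composite n -> ~~ 2.-nat n.
Proof.
move=> sqf /andP[n_gt1 n_npr]; apply/negP=> /p_natP[[|[|k]] n_def].
- by rewrite n_def in n_gt1.
- by rewrite n_def in n_npr.
- have := squarefree_sqr_ndvd (ltnW n_gt1) sqf (isT : prime 2).
  by rewrite n_def !expnS mulnA dvdn_mulr.
Qed.

Theorem proposition4p3 (gT : finGroupType) :
  abelian [set: gT] -> squarefree #|gT| -> composite #|gT| -> GRR_detecting gT.
Proof.
move=> abT sqf cmp S SV stab1.
have not2 : ~~ 2.-group [set: gT].
  by rewrite /pgroup cardsT squarefree_composite_not_2nat.
by have := abelian_aut_stab_neq1 abT not2 SV; rewrite stab1 eqxx.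
Qed.
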